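(* Let $d\in\mathbb{N}$ and let $\mathcal{M},\mathcal{G}\subseteq\mathbb{N}_0^d$ be non-empty games. Then $\mathcal{M}^\infty=\mathcal{G}^\infty$ if and only if $\min(\mathcal{M})=\min(\mathcal{G})$.
   Context: For $d\in\mathbb{N}$ a game is a set $\mathcal{M}\subseteq\mathbb{N}_0^d$ of moves. From position $\boldsymbol x$ a player may move to $\boldsymbol y\in\mathbb{N}_0^d$ iff $\boldsymbol x-\boldsymbol y\in\mathcal{M}$. Misère play: a player who cannot move wins. If $\boldsymbol 0\in\mathcal{M}$, $P(\mathcal{M})=\varnothing$. Otherwise: a position is an N-position if it has no option or some option is a P-position; otherwise it is a P-position; $P(\mathcal{M})$ denotes the set of P-positions. The $\star$-operator is $\mathcal{M}^\star=P(\mathcal{M})$; $\mathcal{M}^0=\mathcal{M}$, $\mathcal{M}^i=(\mathcal{M}^{i-1})^\star$. $\mathcal{M}^\infty=\lim_i\mathcal{M}^i$ is the pointwise limit (the set of $\boldsymbol x$ lying in $\mathcal{M}^i$ for all sufficiently large $i$, where every $\boldsymbol x$ is eventually always in or eventually always out); it always exists. $\min(S)$ is the set of minimal elements of $S$ under the componentwise partial order. *)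

From mathcomp Require Import all_boot.
Set Implicit Arguments. Unset Strict Implicit. Unset Printing Implicit Defensive.

Definition pt (d : nat) := {ffun 'I_d -> nat}.

Definition game (d : nat) := pt d -> Prop.

Definition zero_pt (d : nat) : pt d := [ffun _ => 0].

Definition ple d (x y : pt d) : bool := [forall i, x i <= y i].

(* componentwise (truncated) difference; used only when y <= x *)
Definition psub d (x y : pt d) : pt d := [ffun i => x i - y i].

Definition psum d (x : pt d) : nat := \sum_(i < d) x i.

Definition move d (M : game d) (x y : pt d) : Prop :=
  ple y x /\ M (psub x y).

(* When 0 \notin M every option of x has strictly smaller coordinate sum,
   so fuel = psum x suffices. *)
Fixpoint Pfuel d (M : game d) (k : nat) (x : pt d) : Prop :=
  match k with
  | 0 => False
  | k.+1 => (exists y, move M x y) /\ forall y, move M x y -> ~ Pfuel M k y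
  end.

Definition Ppos d (M : game d) : game d :=
  fun x => ~ M (zero_pt d) /\ Pfuel M (psum x) x.

Fixpoint star_iter d (M : game d) (i : nat) : game d :=
  match i with
  | 0 => M
  | i.+1 => Ppos (star_iter M i)
  end.

(* M^infty: pointwise limit = points eventually always in M^i *)
Definition star_inf d (M : game d) : game d :=
  fun x => exists N, forall i, N <= i -> star_iter M i x.

Definition min_elems d (S : game d) : game d :=
  fun x => S x /\ forall y, S y -> ple y x -> y = x.

From mathcomp Require Import all_boot.
From mathcomp Require Import zify.
From Stdlib Require Import Classical.
Set Implicit Arguments. Unset Strict Implicit. Unset Printing Implicit Defensive.

(* Let U(A) be the up-set generated by A.  If 0 is not a move, the minimal
   elements of A are P-positions and every P-position has an option, so
   U(P(A)) = U(A) and min(A) is contained in every A^i.  Moreover whether x is a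
   P-position of A only depends on U(A) and on the moves of coordinate sum
   below that of x; by induction, games with the same up-set have iterates
   agreeing on all points of coordinate sum < i from step i on.  Hence
   M^oo = G^oo as soon as U(M) = U(G), i.e. min(M) = min(G), and conversely
   min(M^oo) = min(M).  If 0 is a move, M^oo is empty and min(M) = {0}. *)

Section Points.
Variable d : nat.
Implicit Types x y z : pt d.

Lemma pleP x y : reflect (forall i, x i <= y i) (ple x y).
Proof. exact: forallP. Qed.

Lemma ple_refl x : ple x x.
Proof. by apply/pleP. Qed.

Lemma ple_trans x y z : ple x y -> ple y z -> ple x z.
Proof. by move=> /pleP xy /pleP yz; apply/pleP => i; apply: leq_trans (xy i) (yz i). Qed.

Lemma ple_anti x y : ple x y -> ple y x -> x = y.
Proof. by move=> /pleP xy /pleP yx; apply/ffunP => i; apply/eqP; rewrite eqn_leq xy yx. Qed.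

Lemma ple0x x : ple (zero_pt d) x.
Proof. by apply/pleP => i; rewrite ffunE. Qed.

Lemma plex0 x : ple x (zero_pt d) -> x = zero_pt d.
Proof. by move/ple_anti; apply; apply: ple0x. Qed.

Lemma psub_ple x y : ple (psub x y) x.
Proof. by apply/pleP => i; rewrite ffunE leq_subr. Qed.

Lemma psubKr x y : ple y x -> psub x (psub x y) = y.
Proof. by move=> /pleP yx; apply/ffunP => i; rewrite !ffunE subKn. Qed.

Lemma psubx0 x : psub x (zero_pt d) = x.
Proof. by apply/ffunP => i; rewrite !ffunE subn0. Qed.

Lemma psubxx x : psub x x = zero_pt d.
Proof. by apply/ffunP => i; rewrite !ffunE subnn. Qed.

Lemma psub_eq0 x y : psub x y = zero_pt d -> ple x y.
Proof.
move=> e; apply/pleP => i; rewrite -subn_eq0.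
by have := congr1 (fun f : pt d => f i) e; rewrite !ffunE => ->.
Qed.

Lemma psub_eqx x y : ple y x -> psub x y = x -> y = zero_pt d.
Proof.
move=> /pleP yx e; apply/ffunP => i; have := congr1 (fun f : pt d => f i) e.
by rewrite /zero_pt !ffunE => exi; rewrite -(subKn (yx i)) exi subnn.
Qed.

Lemma psumD x y : ple y x -> psum x = psum y + psum (psub x y).
Proof.
by move=> /pleP yx; rewrite /psum -big_split; apply: eq_bigr => i _; rewrite ffunE /= subnKC.
Qed.

Lemma psum0 : psum (zero_pt d) = 0.
Proof. by rewrite /psum big1 // => i _; rewrite ffunE. Qed.

Lemma psum_eq0 x : psum x = 0 -> x = zero_pt d.
Proof.
move/eqP; rewrite /psum sum_nat_eq0 => /forallP x0.
by apply/ffunP => i; rewrite ffunE; apply/eqP; apply: x0.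
Qed.

Lemma psum_lt x y : ple y x -> y <> x -> psum y < psum x.
Proof.
move=> yx ne; rewrite (psumD yx) -[X in X < _]addn0 ltn_add2l lt0n.
by apply/eqP => /psum_eq0 /psub_eq0 xy; apply: ne; apply: ple_anti.
Qed.

Lemma psum_psub_lt x y : ple y x -> y <> zero_pt d -> psum (psub x y) < psum x.
Proof. by move=> yx y0; apply: psum_lt; [apply: psub_ple | move/(psub_eqx yx)]. Qed.

Lemma psum_ind (P : pt d -> Prop) :
  (forall x, (forall y, psum y < psum x -> P y) -> P x) -> forall x, P x.
Proof.
move=> step x; have [n] := ubnP (psum x); elim: n x => [//|n IH] x ltxn.
by apply: step => y lt_yx; apply: IH; apply: leq_trans lt_yx _.
Qed.

End Points.

Section Games.
Variable d : nat.
Implicit Types (x y z m : pt d) (A B : game d).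

Definition upset A x := exists y, A y /\ ple y x.

Lemma min_elems_below A x : A x -> exists2 m, min_elems A m & ple m x.
Proof.
elim/psum_ind: x => x IH Ax.
have [[y [Ay yx ne]] | no_below] := classic (exists y, [/\ A y, ple y x & y <> x]).
  have [m minm my] := IH y (psum_lt yx ne) Ay.
  by exists m => //; apply: ple_trans my yx.
exists x; last exact: ple_refl.
by split=> // y Ay yx; apply: NNPP => ne; apply: no_below; exists y.
Qed.

Lemma upset_min_elems A x : upset (min_elems A) x <-> upset A x.
Proof.
split=> -[y [Ay yx]]; first by exists y; case: Ay.
by have [m minm my] := min_elems_below Ay; exists m; split=> //; apply: ple_trans my yx.
Qed.

Lemma min_elems0 A : min_elems A (zero_pt d) <-> A (zero_pt d).
Proof. by split=> [[] // | A0]; split=> // y _; apply: plex0. Qed.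

Lemma min_elems_has0 A x : A (zero_pt d) -> min_elems A x <-> x = zero_pt d.
Proof.
move=> A0; split=> [[_ minx] | ->]; last exact/min_elems0.
by apply/esym/minx => //; apply: ple0x.
Qed.

Lemma min_elems_ext A B x : (forall z, A z <-> B z) -> min_elems A x <-> min_elems B x.
Proof.
have sub C D : (forall z, C z <-> D z) -> min_elems C x -> min_elems D x.
  by move=> CD [Cx minx]; split=> [|y /CD]; [apply/CD | apply: minx].
by move=> AB; split; apply: sub => // z; rewrite AB.
Qed.

Lemma upset_eq_min_elems A B x :
  (forall m, min_elems A m <-> min_elems B m) -> upset A x <-> upset B x.
Proof.
have sub C D : (forall m, min_elems C m -> min_elems D m) -> upset C x -> upset D x.
  by move=> CD /upset_min_elems [m [/CD minm mx]]; exists m; split=> //; case: minm.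
by move=> AB; split; apply: sub => m /AB.
Qed.

Lemma has_move_upset A x : (exists y, move A x y) <-> upset A x.
Proof.
split=> [[y [yx Ay]] | [y [Ay yx]]]; first by exists (psub x y); split=> //; apply: psub_ple.
by exists (psub x y); split; [apply: psub_ple | rewrite psubKr].
Qed.

Lemma move_psum_lt A x y : ~ A (zero_pt d) -> move A x y -> psum y < psum x.
Proof.
move=> A0 [yx Axy]; apply: (psum_lt yx) => yEx.
by apply: A0; rewrite -(psubxx x) -{2}yEx.
Qed.

Lemma Pfuel_has0 A k : ~ A (zero_pt d) -> ~ Pfuel A k (zero_pt d).
Proof.
move=> A0; case: k => [|k] //= [[y [y0 A0y]] _]; apply: A0.
by rewrite -(psubxx (zero_pt d)) -{2}(plex0 y0).
Qed.

Lemma PfuelS A k x : ~ A (zero_pt d) -> psum x <= k -> Pfuel A k.+1 x <-> Pfuel A k x.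
Proof.
move=> A0; elim: k x => [|k IH] x le_xk.
  have -> : x = zero_pt d by apply: psum_eq0; lia.
  by split=> // /(Pfuel_has0 A0).
have IHopt y : move A x y -> Pfuel A k.+1 y <-> Pfuel A k y.
  by move=> xy; apply: IH; have := move_psum_lt A0 xy; lia.
by split=> -[xopt noP]; split=> // y xy /(IHopt _ xy); apply: noP.
Qed.

Lemma Pfuel_stable A k x : ~ A (zero_pt d) -> psum x <= k ->
  Pfuel A k x <-> Pfuel A (psum x) x.
Proof.
move=> A0; elim: k => [|k IH] le_xk; first by have -> : psum x = 0 by lia.
by case: (ltngtP (psum x) k.+1) le_xk => // [lt_xk _ | <- //]; rewrite PfuelS // IH.
Qed.

Lemma PposE A x : ~ A (zero_pt d) ->
  Ppos A x <-> (exists y, move A x y) /\ (forall y, move A x y -> ~ Ppos A y).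
Proof.
move=> A0; rewrite /Ppos -PfuelS //=.
have fuel y : move A x y -> Pfuel A (psum x) y <-> Pfuel A (psum y) y.
  by move=> xy; apply: Pfuel_stable => //; apply: ltnW; apply: move_psum_lt xy.
split=> [[_ [xopt noP]] | [xopt noP]].
  by split=> // y xy [_ /(fuel _ xy)]; apply: noP.
by split=> //; split=> // y xy /(fuel _ xy) Py; apply: (noP y xy).
Qed.

Lemma Ppos_has0 A x : Ppos A x -> ~ A (zero_pt d).
Proof. by case. Qed.

Lemma Ppos0 A : ~ Ppos A (zero_pt d).
Proof. by rewrite /Ppos psum0 => -[]. Qed.

Lemma Ppos_upset A x : Ppos A x -> upset A x.
Proof.
move=> Px; have [xopt _] := proj1 (PposE x (Ppos_has0 Px)) Px.
exact/has_move_upset.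
Qed.

Lemma min_elems_Ppos A m : ~ A (zero_pt d) -> min_elems A m -> Ppos A m.
Proof.
move=> A0 [Am minm]; apply/PposE => //; split.
  by exists (zero_pt d); split; [apply: ple0x | rewrite psubx0].
move=> y [ym Amy]; rewrite (psub_eqx ym (minm _ Amy (psub_ple m y))); exact: Ppos0.
Qed.

Lemma upset_Ppos A x : ~ A (zero_pt d) -> upset (Ppos A) x <-> upset A x.
Proof.
move=> A0; split=> [[y [Py yx]] | /upset_min_elems [m [minm mx]]].
  by have [z [Az zy]] := Ppos_upset Py; exists z; split=> //; apply: ple_trans zy yx.
by exists m; split=> //; apply: min_elems_Ppos.
Qed.

Lemma min_elems_Ppos_min A m : ~ A (zero_pt d) -> min_elems A m -> min_elems (Ppos A) m.
Proof.
move=> A0 minm; split=> [|y Py ym]; first exact: min_elems_Ppos.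
have [z [Az zy]] := Ppos_upset Py.
have zEm := proj2 minm z Az (ple_trans zy ym).
by apply: ple_anti ym _; rewrite -zEm.
Qed.

(* The option 0 is never a P-position, and for every other option y of x the
   move x - y has coordinate sum below that of x. *)
Lemma Ppos_agree A B n : ~ A (zero_pt d) -> ~ B (zero_pt d) ->
  (forall x, upset A x <-> upset B x) -> (forall z, psum z < n -> A z <-> B z) ->
  forall x, psum x <= n -> Ppos A x <-> Ppos B x.
Proof.
move=> A0 B0 UAB AB; elim/psum_ind => x IH le_xn.
have moveAB y : y <> zero_pt d -> move A x y <-> move B x y.
  move=> y0; split=> -[yx xy]; split=> //; apply/AB => //;
  by have := psum_psub_lt yx y0; lia.
have PAB y : move A x y -> Ppos A y <-> Ppos B y.
  by move=> /(move_psum_lt A0) lt_yx; apply: IH => //; lia.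
rewrite !PposE //; split=> -[xopt noP]; split.
- by apply/has_move_upset/UAB/has_move_upset.
- move=> y xy Py; have [y0 | y0] := classic (y = zero_pt d).
    by move: Py; rewrite y0 => /Ppos0.
  have Axy := proj2 (moveAB y y0) xy.
  by apply: (noP y Axy); apply/(PAB y Axy).
- by apply/has_move_upset/UAB/has_move_upset.
- move=> y xy Py; have [y0 | y0] := classic (y = zero_pt d).
    by move: Py; rewrite y0 => /Ppos0.
  by apply: (noP y (proj1 (moveAB y y0) xy)); apply/(PAB y xy).
Qed.

End Games.

Section Iterates.
Variable d : nat.
Implicit Types (x y m : pt d) (M G : game d).

Lemma star_iter_has0 M i : ~ M (zero_pt d) -> ~ star_iter M i (zero_pt d).
Proof. by case: i => [|i] //= _; apply: Ppos0. Qed.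

Lemma upset_star_iter M i x : ~ M (zero_pt d) -> upset (star_iter M i) x <-> upset M x.
Proof. by move=> M0; elim: i => [|i IH] //=; rewrite upset_Ppos //; apply: star_iter_has0. Qed.

Lemma min_elems_star_iter M m i :
  ~ M (zero_pt d) -> min_elems M m -> min_elems (star_iter M i) m.
Proof.
move=> M0 minm; elim: i => [|i IH] //=.
by apply: min_elems_Ppos_min IH; apply: star_iter_has0.
Qed.

Lemma star_iter_empty M i x : M (zero_pt d) -> ~ star_iter M i.+1 x.
Proof.
move=> M0; elim: i x => [|i IH] x /= Px; first exact: Ppos_has0 Px M0.
by have [y [/IH]] := Ppos_upset Px.
Qed.

Lemma star_iter_agree M G n i x : ~ M (zero_pt d) -> ~ G (zero_pt d) ->
  (forall x, upset M x <-> upset G x) ->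
  n <= i -> psum x < n -> star_iter M i x <-> star_iter G i x.
Proof.
move=> M0 G0 UMG; elim: n i x => [|n IH] [|i] x //= le_ni lt_xn.
apply: (@Ppos_agree _ _ _ n); rewrite ?ltnS //; try exact: star_iter_has0.
  by move=> z; rewrite !upset_star_iter.
by move=> z lt_zn; apply: IH.
Qed.

Lemma star_inf_empty M x : M (zero_pt d) -> ~ star_inf M x.
Proof. by move=> M0 [N infx]; exact: star_iter_empty M0 (infx N.+1 (leqnSn N)). Qed.

Lemma upset_star_inf M x : ~ M (zero_pt d) -> star_inf M x -> upset M x.
Proof.
move=> M0 [N infx]; rewrite -(upset_star_iter N) //.
exact: Ppos_upset (infx N.+1 (leqnSn N)).
Qed.

Lemma min_elems_star_inf M x :
  ~ M (zero_pt d) -> min_elems (star_inf M) x <-> min_elems M x.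
Proof.
move=> M0; have inf_min m : min_elems M m -> star_inf M m.
  by move=> minm; exists 0 => i _; case: (min_elems_star_iter i M0 minm).
split=> [[infx minx] | minx].
  have [y [My yx]] := upset_star_inf M0 infx; have [m minm my] := min_elems_below My.
  by rewrite -(minx m (inf_min m minm) (ple_trans my yx)).
split=> [|y infy yx]; first exact: inf_min.
have [z [Mz zy]] := upset_star_inf M0 infy.
have zEx := proj2 minx z Mz (ple_trans zy yx).
by apply: ple_anti yx _; rewrite -zEx.
Qed.

Lemma star_inf_nonempty M : (exists x, M x) -> (exists x, star_inf M x) <-> ~ M (zero_pt d).
Proof.
move=> [x Mx]; split=> [[y infy] M0 | M0]; first exact: star_inf_empty M0 infy.
have [m minm _] := min_elems_below Mx.
by exists m; have [] := proj2 (min_elems_star_inf m M0) minm.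
Qed.

Lemma star_inf_agree M G x : ~ M (zero_pt d) -> ~ G (zero_pt d) ->
  (forall x, upset M x <-> upset G x) -> star_inf M x <-> star_inf G x.
Proof.
move=> M0 G0 UMG.
have agree i : (psum x).+1 <= i -> star_iter M i x <-> star_iter G i x.
  by move=> le_i; apply: (star_iter_agree M0 G0 UMG le_i (ltnSn _)).
split=> -[N infx]; exists (maxn N (psum x).+1) => i; rewrite geq_max => /andP[le_Ni le_i].
  exact: (proj1 (agree i le_i) (infx i le_Ni)).
exact: (proj2 (agree i le_i) (infx i le_Ni)).
Qed.

End Iterates.

Theorem theorem5 (d : nat) (M G : game d) :
  0 < d ->
  (exists x, M x) -> (exists x, G x) ->
  ((forall x, star_inf M x <-> star_inf G x) <->
   (forall x, min_elems M x <-> min_elems G x)).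
Proof.
move=> _ neM neG; split=> [infMG x | minMG x].
  have MG0 : ~ M (zero_pt d) <-> ~ G (zero_pt d).
    rewrite -(star_inf_nonempty neM) -(star_inf_nonempty neG).
    by split=> -[y /infMG]; exists y.
  have [M0 | M0] := classic (M (zero_pt d)).
    have G0 : G (zero_pt d) by apply: NNPP => /MG0.
    by rewrite !min_elems_has0.
  have G0 : ~ G (zero_pt d) by apply/MG0.
  rewrite -(min_elems_star_inf x M0) -(min_elems_star_inf x G0).
  exact: min_elems_ext.
have [M0 | M0] := classic (M (zero_pt d)).
  have G0 : G (zero_pt d) by apply/min_elems0/minMG/min_elems0.
  by split=> [/(star_inf_empty M0) | /(star_inf_empty G0)].
have G0 : ~ G (zero_pt d) by move=> /min_elems0 /minMG /min_elems0.
by apply: star_inf_agree => // y; apply: upset_eq_min_elems.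
Qed.
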